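(* Let $(\mathcal X,\mathcal B,\pi)$, $r$, an arbitrary real-valued noise field $\varepsilon$, $Q$, $Q_*$, $\alpha\in(0,1)$ be as in the context. Assume: (a) $p_0,p_{\rm ref}\in\mathcal P_\pi$ with $\int p|\log p|\,d\pi<\infty$ for $p\in\{p_0,p_{\rm ref}\}$; (b) $\mathbb E_{X\sim p}[e^{|r(X)+\varepsilon(X)|}]<\infty$ for all $p\in\mathcal P_\pi$; (c) $0<Q_*<\infty$, $Q\le Q_*$ everywhere; (d) $\operatorname*{ess\,sup}_x p_0(x)/p_{\rm ref}(x)<\infty$; (e) $\alpha>\Bigl(\int\frac{Q_*}{Q_*-Q(x)}p_{\rm ref}(x)\,\pi(dx)\Bigr)^{-1}$; (f) $Q_{\min}:=\operatorname*{ess\,inf}_x Q(x)>0$. Let $p_{t+1}(x)=\alpha p_{\rm ref}(x)+(1-\alpha)p_t(x)Q(x)/\mathbb E_{X\sim p_t}Q(X)$, $w_t:=p_t/p_{\rm ref}$, and let $w_*$ be the unique fixed point of $L_N$ in $\mathcal P_{\mathbb P_{\rm ref}}$. Then $d_{\mathcal H}(w_t,w_* )$ is finite and strictly decreasing for all $t\ge1$, and $\lim_{t\to\infty}d_{\mathcal H}(w_t,w_* )=0$.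
   Context: $\pi$ is $\sigma$-finite; $\mathcal P_\pi$ = probability densities w.r.t. $\pi$; $r$ measurable; $\{\varepsilon(x)\}$ a real-valued random field. $Q(x):=e^{r(x)}\mathbb E[e^{\varepsilon(x)}]$, $Q_*:=\operatorname*{ess\,sup}_\pi Q$. In (e), the integrand is $+\infty$ where $Q=Q_*$ and the reciprocal of $+\infty$ is $0$. $\mathbb P_{\rm ref}(dx)=p_{\rm ref}(x)\pi(dx)$; $\mathcal P_{\mathbb P_{\rm ref}}$ = probability densities w.r.t. $\mathbb P_{\rm ref}$; $\langle f,g\rangle_{\rm ref}=\int fg\,d\mathbb P_{\rm ref}$; cone $\mathcal K=\{f\in L^1(\mathbb P_{\rm ref}):f>0\ \mathbb P_{\rm ref}\text{-a.s.}\}$. $L[f]=\alpha\langle f,Q\rangle_{\rm ref}+(1-\alpha)fQ$ and $L_N[f]=L[f]/\langle f,Q\rangle_{\rm ref}=\alpha+(1-\alpha)fQ/\langle f,Q\rangle_{\rm ref}$ on $\mathcal K$ (under (c),(e) a unique fixed point of $L_N$ in $\mathcal P_{\mathbb P_{\rm ref}}$ exists). Hilbert projective metric: for $u,v\in\mathcal K$, $d_{\mathcal H}(u,v)=\log\bigl(\operatorname*{ess\,sup}\frac uv\cdot\operatorname*{ess\,sup}\frac vu\bigr)$, essential suprema w.r.t. $\mathbb P_{\rm ref}$. *)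

From HB Require Import structures.
From mathcomp Require Import all_boot all_order all_algebra.
From mathcomp Require Import all_classical all_reals all_analysis ess_sup_inf.
Set Implicit Arguments. Unset Strict Implicit. Unset Printing Implicit Defensive.
Import Order.TTheory GRing.Theory Num.Theory.
Local Open Scope classical_set_scope.
Local Open Scope ring_scope.

Section defs.
Context d (X : measurableType d) (R : realType).
Variable pi : {measure set X -> \bar R}.

Definition is_density (p : X -> R) : Prop :=
  [/\ measurable_fun [set: X] p, (forall x, 0 <= p x) &
      (\int[pi]_x (p x)%:E = 1)%E].

(* "P_ref-almost surely", where P_ref(dx) = pref(x) pi(dx):
   P holds outside a measurable P_ref-null set *)
Definition ae_ref (pref : X -> R) (P : X -> Prop) : Prop :=
  exists N, [/\ measurable N, (\int[pi]_(x in N) (pref x)%:E = 0)%E &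
                [set x | ~ P x] `<=` N].

(* essential supremum w.r.t. P_ref (same definition as the library's ess_sup) *)
Definition ess_sup_ref (pref : X -> R) (f : X -> \bar R) : \bar R :=
  ereal_inf [set y | ae_ref pref (fun x => (f x <= y)%E)].

Definition inner_ref (pref f g : X -> R) : R :=
  fine (\int[pi]_x (f x * g x * pref x)%:E).

Definition hilbert_ref (pref u v : X -> R) : \bar R :=
  let a := ess_sup_ref pref (fun x => (u x / v x)%:E) in
  let b := ess_sup_ref pref (fun x => (v x / u x)%:E) in
  if (a \is a fin_num) && (b \is a fin_num) then (ln (fine a * fine b))%:E
  else +oo%E.

Fixpoint iter_p (alpha : R) (pref Q p0 : X -> R) (t : nat) : X -> R :=
  match t with
  | 0 => p0
  | t'.+1 => let pt := iter_p alpha pref Q p0 t' in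
      fun x => alpha * pref x +
               (1 - alpha) * pt x * Q x / fine (\int[pi]_y (pt y * Q y)%:E)
  end.

End defs.

Definition Qfun d (X : measurableType d) d' (Omega : measurableType d')
  (R : realType) (P : probability Omega R) (r : X -> R) (eps : X -> Omega -> R)
  (x : X) : \bar R :=
  ((expR (r x))%:E * \int[P]_w (expR (eps x w))%:E)%E.

(* a / b with the conventions a/0 = +oo for a > 0 and 0/0 = 0 *)
Definition ratio_e (R : realType) (a b : R) : \bar R :=
  if b == 0 then (if a == 0 then 0%E else +oo%E) else (a / b)%:E.

Definition einv (R : realType) (I : \bar R) : \bar R :=
  if I == +oo%E then 0%E else (1 / fine I)%:E.

From HB Require Import structures.
From mathcomp Require Import all_boot all_order all_algebra.
From mathcomp Require Import all_classical all_reals all_analysis ess_sup_inf.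
From mathcomp Require Import measurable_realfun ring lra.
Import Order.TTheory GRing.Theory Num.Theory numFieldNormedType.Exports.
Local Open Scope classical_set_scope.
Local Open Scope ring_scope.

(* Write lam = <w_*, Q>_ref and c_t = lam / E_{p_t} Q. The fixed-point equation reads
   (1 - alpha) Q = lam (1 - s) with s = alpha / w_*, so the ratio w_t / w_* evolves by the
   pointwise mixture  w_{t+1} / w_* = s + (1 - s) c_t (w_t / w_* ).  Condition (e) forces
   lam > (1 - alpha) Q_*, i.e. s >= delta := 1 - (1 - alpha) Q_* / lam > 0.  If
   m <= w_t / w_* <= M then c_t m <= 1 <= c_t M, and the new bounds
   delta + (1 - delta) c_t m and delta + (1 - delta) c_t M have ratio at most
   delta + (1 - delta) M / m.  Hence K_t = exp d_H(w_t, w_* ) satisfies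
   K_{t+1} - 1 <= (1 - delta) (K_t - 1), and (d) makes K_1 finite. *)

Section mixture.
Context {R : realFieldType}.

Lemma mix_le {d s x : R} : d <= s <= 1 -> 1 <= x -> s + (1 - s) * x <= d + (1 - d) * x.
Proof. by move=> /andP[ds s1] x1; nra. Qed.

Lemma mix_ge {d s x : R} : d <= s <= 1 -> x <= 1 -> d + (1 - d) * x <= s + (1 - s) * x.
Proof. by move=> /andP[ds s1] x1; nra. Qed.

Lemma mix_ratio_le {d x y : R} : 0 <= d <= 1 -> 0 < x <= 1 -> 1 <= y ->
  (d + (1 - d) * y) / (d + (1 - d) * x) <= d + (1 - d) * (y / x).
Proof.
move=> /andP[d0 d1] /andP[x0 x1] y1.
have mix_gt0 : 0 < d + (1 - d) * x by nra.
have [z z1 ->] : exists2 z, 1 <= z & y = z * x.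
  by exists (y / x); [rewrite ler_pdivlMr// mul1r (le_trans x1) | rewrite divfK ?gt_eqF].
rewrite mulfK ?gt_eqF// ler_pdivrMr//.
have gap : 0 <= d * (1 - d) * ((1 - x) * (z - 1)).
  by rewrite !mulr_ge0 ?subr_ge0.
nra.
Qed.

End mixture.

Lemma einv_ge {R : realType} {a : R} {I : \bar R} : 0 < a ->
  (1 <= I)%E -> (I <= a^-1%:E)%E -> (a%:E <= einv I)%E.
Proof.
move=> a_gt0; case: I => [r r_ge1 r_le| _|]; rewrite ?leye_eq ?leeNy_eq//.
rewrite /einv /= !lee_fin mul1r in r_ge1 r_le *.
have r_gt0 : 0 < r := lt_le_trans ltr01 r_ge1.
by rewrite -[a]invrK lef_pV2 ?posrE ?invr_gt0.
Qed.

Section affine_contraction.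
Context {R : realType} {d : R} {K : nat -> R}.
Hypotheses (d_gt0 : 0 < d) (d_le1 : d <= 1) (K_ge1 : forall n, 1 <= K n)
  (K_contract : forall n, K n.+1 <= d + (1 - d) * K n).

Let K_sub1 n : K n.+1 - 1 <= (1 - d) * (K n - 1).
Proof. by have := K_contract n; lra. Qed.

Let K_pos n : K n \is Num.pos.
Proof. by rewrite posrE (lt_le_trans ltr01). Qed.

Let ln_K_le n : ln (K n.+1) <= ln (K n).
Proof.
rewrite ler_ln//; have := K_sub1 n; have := K_ge1 n.
have := d_gt0; nra.
Qed.

Let ln_K_lt n : 0 < ln (K n) -> ln (K n.+1) < ln (K n).
Proof.
move=> lnK_gt0; have K_gt1 : 1 < K n.
  by rewrite ltNge; apply: contraTN lnK_gt0 => /ln_le0; rewrite leNgt.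
by rewrite ltr_ln//; have := K_sub1 n; have := d_gt0; nra.
Qed.

Let ln_K_cvg0 : ln (K n) @[n --> \oo] --> 0.
Proof.
have K_geo n : K n - 1 <= (K 0 - 1) * (1 - d) ^+ n.
  elim: n => [|n IHn]; first by rewrite expr0 mulr1.
  rewrite exprS mulrCA; apply: le_trans (K_sub1 n) _.
  by rewrite ler_wpM2l// subr_ge0.
apply: (@squeeze_cvgr _ _ _ _ (fun=> 0) (geometric (K 0 - 1) (1 - d))).
- apply: nearW => n /=; rewrite ln_ge0//=; apply: le_trans (K_geo n).
  by have := expR_ge1Dx (ln (K n)); rewrite lnK// lerBrDl.
- exact: cvg_cst.
- by apply: cvg_geometric; rewrite ger0_norm ?subr_ge0// ltrBlDr ltrDl.
Qed.

Lemma ln_affine_contraction :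
  [/\ forall n, ln (K n.+1) <= ln (K n),
      forall n, 0 < ln (K n) -> ln (K n.+1) < ln (K n) &
      ln (K n) @[n --> \oo] --> 0].
Proof. by split; [exact: ln_K_le|exact: ln_K_lt|exact: ln_K_cvg0]. Qed.

End affine_contraction.

Section ge0_le_integral_nm.
Context d (T : measurableType d) (R : realType).
Variable mu : {measure set T -> \bar R}.
Local Open Scope ereal_scope.

Lemma ge0_le_integral_nm (f g : T -> \bar R) : (forall x, 0 <= f x) ->
  (forall x, f x <= g x) -> \int[mu]_x f x <= \int[mu]_x g x.
Proof.
move=> f0 fg; have g0 x : 0 <= g x by exact: le_trans (fg x).
rewrite !ge0_integralTE//; apply: le_ereal_sup => _ [h /= hf <-].
by exists h => //= x; exact: le_trans (hf x) (fg x).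
Qed.

Lemma ae_ge0_le_integral_nm (f g : T -> \bar R) : (forall x, 0 <= f x) ->
  (forall x, 0 <= g x) -> measurable_fun [set: T] g ->
  {ae mu, forall x, f x <= g x} -> \int[mu]_x f x <= \int[mu]_x g x.
Proof.
move=> f0 g0 mg [N [mN N0 fgN]].
have m1N : measurable_fun [set: T] (fun x => (\1_N x : R)%:E).
  by apply/(measurable_EFinP [set: T] (\1_N)); exact: measurable_indic.
(* outside [N] the bound holds, and on [N] the majorant is lifted to [+oo] *)
apply: (@le_trans _ _ (\int[mu]_x (g x + +oo * (\1_N x : R)%:E))).
  apply: ge0_le_integral_nm => // x; have [Nx|Nx] := pselect (N x).
    by rewrite indicE mem_set// mule1 addey ?leey// gt_eqF// (lt_le_trans ltNy0).
  by rewrite indicE memNset// mule0 adde0; apply: contrapT => /fgN.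
rewrite ge0_integralD//; last exact: emeasurable_funM.
by rewrite ge0_integralZl// integral_indic// setIT N0 mule0 adde0.
Qed.

End ge0_le_integral_nm.

Section ess_sup_ratio.
Context d (T : measurableType d) (R : realType).
Variable mu : {measure set T -> \bar R}.
Hypothesis mu_gt0 : (0 < mu [set: T])%E.

Definition ratio_within (u v : T -> R) (m M : R) :=
  {ae mu, forall x, [/\ 0 < u x, 0 < v x & m <= u x / v x <= M]}.

Let ae_proper := ae_properfilter_algebraOfSetsType mu_gt0.

Lemma ratio_within_le u v m M : ratio_within u v m M -> m <= M.
Proof.
by move=> uv; have [x [_ _ /andP[mx xM]]] := @filter_ex _ _ ae_proper _ uv; exact: le_trans xM.
Qed.

Lemma ess_sup_ratio u v m M : 0 < m -> ratio_within u v m M ->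
  exists a b, [/\ ess_sup mu (fun x => (u x / v x)%:E) = a%:E,
    ess_sup mu (fun x => (v x / u x)%:E) = b%:E, 0 < b,
    [/\ a <= M & b <= m^-1] & ratio_within u v b^-1 a].
Proof.
move=> m_gt0 uv.
set A := ess_sup mu _; set B := ess_sup mu _.
have A_le : (A <= M%:E)%E.
  by apply/ess_supP; apply: filterS uv => x [_ _ /andP[_]]; rewrite lee_fin.
have B_le : (B <= m^-1%:E)%E.
  apply/ess_supP; apply: filterS uv => x [ux vx /andP[mx _]].
  by rewrite lee_fin -invf_div lef_pV2 ?posrE ?divr_gt0.
have A_ge := ess_sup_ge mu (fun x => (u x / v x)%:E).
have B_ge := ess_sup_ge mu (fun x => (v x / u x)%:E).
have [x0 [[ux0 vx0 _] [Ax0 Bx0]]] :=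
  @filter_ex _ _ ae_proper _ (filterI uv (filterI A_ge B_ge)).
have A_ge0 : (0 <= A)%E by apply: le_trans Ax0; rewrite lee_fin divr_ge0 ?ltW.
have B_ge0 : (0 <= B)%E by apply: le_trans Bx0; rewrite lee_fin divr_ge0 ?ltW.
have A_fin : A \is a fin_num by rewrite ge0_fin_numE// (le_lt_trans A_le (ltry _)).
have B_fin : B \is a fin_num by rewrite ge0_fin_numE// (le_lt_trans B_le (ltry _)).
have b_gt0 : 0 < fine B.
  by rewrite -lte_fin fineK// (lt_le_trans _ Bx0)// lte_fin divr_gt0.
exists (fine A), (fine B); rewrite !fineK//; split => //.
  by rewrite -!lee_fin !fineK.
apply: filterS2 uv (filterI A_ge B_ge) => x [ux vx _] [Ax Bx].
rewrite ux vx; split => //; apply/andP; split; last by rewrite -lee_fin fineK.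
by rewrite -invf_div lef_pV2 ?posrE ?divr_gt0// -lee_fin fineK.
Qed.

End ess_sup_ratio.
Arguments ratio_within {d T R} mu.
Arguments ratio_within_le {d T R mu} mu_gt0 {u v m M}.
Arguments ess_sup_ratio {d T R mu} mu_gt0 {u v m M}.

Section density_measure.
Context d (X : measurableType d) (R : realType).
Variables (pi : {measure set X -> \bar R}) (pref : X -> R).
Hypotheses (mpref : measurable_fun [set: X] pref) (pref_ge0 : forall x, 0 <= pref x).

Definition density_measure (A : set X) := (\int[pi]_(x in A) (pref x)%:E)%E.

Let density_measure0 : density_measure set0 = 0%E.
Proof. by rewrite /density_measure integral_set0. Qed.

Let density_measure_ge0 A : (0 <= density_measure A)%E.
Proof. by apply: integral_ge0 => x _; rewrite lee_fin. Qed.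

Let density_measure_sigma_additive : semi_sigma_additive density_measure.
Proof.
move=> F mF tF mUF; rewrite /density_measure ge0_integral_bigcup//=.
- apply: is_cvg_ereal_nneg_natsum_cond => n _ _.
  by apply: integral_ge0 => x _; rewrite lee_fin.
- by apply/measurable_EFinP; exact: measurable_funS mpref.
- by move=> x _; rewrite lee_fin.
Qed.

HB.instance Definition _ := isMeasure.Build _ _ _ density_measure
  density_measure0 density_measure_ge0 density_measure_sigma_additive.

Lemma hilbert_refE (u v : X -> R) (a b : R) :
  ess_sup density_measure (fun x => (u x / v x)%:E) = a%:E ->
  ess_sup density_measure (fun x => (v x / u x)%:E) = b%:E ->
  hilbert_ref pi pref u v = (ln (a * b))%:E.
Proof.
have ess_sup_refE f : ess_sup_ref pi pref f = ess_sup density_measure f by [].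
by rewrite /hilbert_ref !ess_sup_refE => -> ->.
Qed.

Lemma ae_density_measure {P : X -> Prop} :
  {ae pi, forall x, P x} -> {ae density_measure, forall x, P x}.
Proof.
case=> N [mN N0 PN]; exists N; split => //.
rewrite /density_measure null_set_integral//.
by apply/measurable_EFinP; exact: measurable_funS mpref.
Qed.

Lemma ae_density_measure_gt0 : {ae density_measure, forall x, 0 < pref x}.
Proof.
exists (pref @^-1` `]-oo, 0]); split.
- by rewrite -[X in measurable X]setTI; exact: mpref.
- rewrite /density_measure integral0_eq// => x /=; rewrite in_itv/= => pref_le0.
  by congr EFin; apply/eqP; rewrite eq_le pref_le0 pref_ge0.
- by move=> x /=; rewrite in_itv/= leNgt => /negP.
Qed.

Lemma density_measure_ae {P : X -> Prop} : {ae density_measure, forall x, P x} ->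
  {ae pi, forall x, 0 < pref x -> P x}.
Proof.
case=> N [mN N0 PN].
have mprefN : measurable_fun N (fun x => (pref x)%:E).
  by apply/measurable_EFinP; exact: measurable_funS mpref.
have /(ae_eq_integral_abs pi mN mprefN) [M [mM M0 MN]] :
    (\int[pi]_(x in N) `|(pref x)%:E| = 0)%E.
  by rewrite -N0; apply: eq_integral => x _; rewrite gee0_abs// lee_fin.
exists M; split => // x /= /not_implyP[pref_gt0 nPx].
apply: MN => /(_ (PN x nPx)) [pref0].
by rewrite pref0 ltxx in pref_gt0.
Qed.

Lemma le_integral_density {g h : X -> \bar R} : (forall x, 0 <= g x)%E ->
  (forall x, 0 <= h x)%E -> measurable_fun [set: X] h ->
  {ae density_measure, forall x, g x <= h x}%E ->
  (\int[pi]_x (g x * (pref x)%:E) <= \int[pi]_x (h x * (pref x)%:E))%E.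
Proof.
move=> g0 h0 mh /density_measure_ae gh.
apply: ae_ge0_le_integral_nm => [x|x||].
- by rewrite mule_ge0// lee_fin.
- by rewrite mule_ge0// lee_fin.
- by apply: emeasurable_funM => //; exact/measurable_EFinP.
apply: filterS gh => x gh; have [pref_gt0|pref_le0] := ltP 0 (pref x).
  by rewrite lee_wpmul2r ?lee_fin ?gh// ltW.
have -> : pref x = 0 by apply/eqP; rewrite eq_le pref_le0 pref_ge0.
by rewrite !mule0.
Qed.


Section iteration.
Variables (alpha Qstar : R) (Q p0 wstar : X -> R).
Hypotheses (mQ : measurable_fun [set: X] Q) (Q_ge0 : forall x, 0 <= Q x)
  (Q_le : forall x, Q x <= Qstar) (Qstar_gt0 : 0 < Qstar)
  (alpha_gt0 : 0 < alpha) (alpha_lt1 : alpha < 1).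
Hypotheses (mp0 : measurable_fun [set: X] p0) (p0_ge0 : forall x, 0 <= p0 x)
  (pref_int1 : (\int[pi]_x (pref x)%:E = 1)%E).
Hypothesis p0_pref_bounded :
  (ess_sup pi (fun x => ratio_e (p0 x) (pref x)) < +oo)%E.
Hypothesis alpha_large : (einv (\int[pi]_x
  ((if Q x == Qstar then +oo else (Qstar / (Qstar - Q x))%:E) * (pref x)%:E))
  < alpha%:E)%E.
Hypotheses (mwstar : measurable_fun [set: X] wstar)
  (wstar_ge0 : forall x, 0 <= wstar x)
  (wstar_int1 : (\int[pi]_x (wstar x * pref x)%:E = 1)%E)
  (wstar_gt0 : {ae density_measure, forall x, 0 < wstar x})
  (wstar_fixed : {ae density_measure, forall x, wstar x =
     alpha + (1 - alpha) * wstar x * Q x / inner_ref pi pref wstar Q}).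

Let density_measureT_gt0 : (0 < density_measure [set: X])%E.
Proof. by rewrite [density_measure _]pref_int1 lte01. Qed.

Let integralZ_EFin (k : R) (f : X -> R) : 0 <= k -> measurable_fun [set: X] f ->
  (forall x, 0 <= f x) ->
  (\int[pi]_x (k * f x)%:E = k%:E * \int[pi]_x (f x)%:E)%E.
Proof.
move=> k_ge0 mf f_ge0; under eq_integral do rewrite EFinM.
by apply: ge0_integralZl_EFin => //; [move=> x _; rewrite lee_fin|exact/measurable_EFinP].
Qed.

Let p t := iter_p pi alpha pref Q p0 t.
Let w t x := p t x / pref x.
Let Z t := fine (\int[pi]_y (p t y * Q y)%:E).
Let lam := inner_ref pi pref wstar Q.

Let oneBalpha_ge0 : 0 <= 1 - alpha.
Proof. by rewrite subr_ge0 ltW. Qed.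

Lemma measurable_iter t : measurable_fun [set: X] (p t).
Proof.
elim: t => [//|t IHt]; apply: measurable_funD; first exact: measurable_funM.
apply: measurable_funM => //; apply: measurable_funM => //; exact: measurable_funM.
Qed.

Lemma iter_succ t x :
  p t.+1 x = alpha * pref x + (1 - alpha) * p t x * Q x / Z t.
Proof. by []. Qed.

Lemma iter_ge0 t x : 0 <= p t x.
Proof.
elim: t x => [//|t IHt] x; rewrite iter_succ.
have Z_ge0 : 0 <= Z t.
  by apply: fine_ge0; apply: integral_ge0 => y _; rewrite lee_fin mulr_ge0.
by rewrite addr_ge0 ?mulr_ge0 ?invr_ge0 ?oneBalpha_ge0 ?(ltW alpha_gt0).
Qed.

Lemma iter_weight_succ t x : 0 < pref x ->
  w t.+1 x = alpha + (1 - alpha) * w t x * Q x / Z t.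
Proof.
move=> pref_gt0; rewrite /w iter_succ mulrDl mulfK ?gt_eqF//.
by congr (_ + _); ring.
Qed.

Let w_ge0 t x : 0 <= w t x.
Proof. by rewrite divr_ge0 ?iter_ge0. Qed.

Let Z_ge0 t : 0 <= Z t.
Proof.
by apply: fine_ge0; apply: integral_ge0 => y _; rewrite lee_fin mulr_ge0 ?iter_ge0.
Qed.

Lemma alpha_le_iter_weight_succ t x : 0 < pref x -> alpha <= w t.+1 x.
Proof.
by move=> pref_gt0; rewrite iter_weight_succ// lerDl !mulr_ge0 ?invr_ge0
  ?oneBalpha_ge0 ?iter_ge0 ?pref_ge0 ?Q_ge0 ?Z_ge0.
Qed.

Lemma iter_weight0_bounded : exists Y, {ae pi, forall x,
  (pref x = 0 -> p0 x = 0) /\ (0 < pref x -> w 0 x <= Y)}.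
Proof.
have [Y ess_le] : exists Y, (ess_sup pi (fun x => ratio_e (p0 x) (pref x)) <= Y%:E)%E.
  by move: p0_pref_bounded; case: ess_sup => [Y _| |_]//; [exists Y|exists 0]; rewrite ?leNye.
exists Y; apply: filterS (ess_sup_ge pi _) => x /le_trans/(_ ess_le).
rewrite /ratio_e; case: eqVneq => [pref0|pref_neq0].
  case: eqVneq => [p00 _|_]; last by rewrite leye_eq.
  by split => // pref_gt0; rewrite pref0 ltxx in pref_gt0.
by rewrite lee_fin; split => // pref0; rewrite pref0 eqxx in pref_neq0.
Qed.

Lemma iter_eq_weight_pref : {ae pi, forall x t, p t x = w t x * pref x}.
Proof.
have [Y bounded] := iter_weight0_bounded.
apply: filterS bounded => x [p00 _] t; have [pref0|pref_neq0] := eqVneq (pref x) 0.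
  rewrite pref0 mulr0; elim: t => [|t IHt]; first exact: p00.
  by rewrite iter_succ IHt pref0 !(mulr0, mul0r, addr0).
by rewrite /w divfK.
Qed.

Lemma inner_wstarE : (\int[pi]_x (wstar x * Q x * pref x)%:E)%E = lam%:E.
Proof.
have int_Qstar : (\int[pi]_x (Qstar * (wstar x * pref x))%:E = Qstar%:E)%E.
  rewrite integralZ_EFin ?wstar_int1 ?mule1 ?(ltW Qstar_gt0)//.
    exact: measurable_funM.
  by move=> x; rewrite mulr_ge0.
have int_le : (\int[pi]_x (wstar x * Q x * pref x)%:E <= Qstar%:E)%E.
  rewrite -int_Qstar; apply: ge0_le_integral_nm => x.
    by rewrite lee_fin !mulr_ge0.
  by rewrite lee_fin mulrAC mulrC ler_wpM2r ?mulr_ge0.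
have int_ge0 : (0 <= \int[pi]_x (wstar x * Q x * pref x)%:E)%E.
  by apply: integral_ge0 => x _; rewrite lee_fin !mulr_ge0.
by rewrite /lam /inner_ref fineK// ge0_fin_numE// (le_lt_trans int_le (ltry _)).
Qed.

Lemma inner_wstar_gt0 : 0 < lam.
Proof.
have lam_ge0 : 0 <= lam.
  by rewrite -lee_fin -inner_wstarE; apply: integral_ge0 => x _; rewrite lee_fin !mulr_ge0.
rewrite lt_def lam_ge0 andbT; apply/negP => /eqP lam0.
have wstar_le : {ae density_measure, forall x, (wstar x)%:E <= alpha%:E}%E.
  by apply: filterS wstar_fixed => x ->; rewrite -/lam lam0 invr0 mulr0 addr0.
have : (\int[pi]_x ((wstar x)%:E * (pref x)%:E) <=
         \int[pi]_x (alpha%:E * (pref x)%:E))%E.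
  apply: le_integral_density wstar_le => [x|x|].
  - by rewrite lee_fin.
  - by rewrite lee_fin ltW.
  - exact: measurable_cst.
under eq_integral do rewrite -EFinM.
rewrite wstar_int1 ge0_integralZl_EFin ?pref_int1 ?mule1 ?lee_fin ?(ltW alpha_gt0)//.
- by rewrite leNgt alpha_lt1.
- by move=> x _; rewrite lee_fin.
- exact/measurable_EFinP.
Qed.

Let lam_ge0 : 0 <= lam := ltW inner_wstar_gt0.

Lemma wstar_fixed_weight : {ae density_measure, forall x,
  0 < wstar x /\ (1 - alpha) * Q x / lam = 1 - alpha / wstar x}.
Proof.
apply: filterS2 wstar_gt0 wstar_fixed => x ws_gt0 wE; split => //.
rewrite -/lam in wE.
have -> : 1 - alpha / wstar x = (wstar x - alpha) / wstar x.
  by rewrite mulrBl divff ?gt_eqF.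
by rewrite {1}wE addrAC subrr add0r; field; rewrite !gt_eqF ?inner_wstar_gt0.
Qed.

Let Qweight x := if Q x == Qstar then +oo%E else (Qstar / (Qstar - Q x))%:E.

Lemma Qweight_ge1 x : (1 <= Qweight x)%E.
Proof.
rewrite /Qweight; case: ifPn => [_|Q_neq]; first exact: leey.
have Q_lt : 0 < Qstar - Q x by rewrite subr_gt0 lt_neqAle Q_neq Q_le.
by rewrite lee_fin ler_pdivlMr// mul1r lerBlDr lerDl.
Qed.

Lemma integral_Qweight_ge1 : (1 <= \int[pi]_x (Qweight x * (pref x)%:E))%E.
Proof.
rewrite -pref_int1; apply: ge0_le_integral_nm => x; first by rewrite lee_fin.
by rewrite -{1}[(pref x)%:E]mul1e lee_wpmul2r ?lee_fin ?Qweight_ge1.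
Qed.

Lemma inner_wstar_gt : (1 - alpha) * Qstar < lam.
Proof.
rewrite ltNge; apply/negP => lam_le.
(* otherwise [Qweight <= w_* / alpha], whose [P_ref]-mean is [1 / alpha], contradicting (e) *)
have weight_le : {ae density_measure, forall x, Qweight x <= (wstar x / alpha)%:E}%E.
  apply: filterS wstar_fixed_weight => x [ws_gt0 wE].
  have ratio_le : Q x / Qstar <= (1 - alpha) * Q x / lam.
    rewrite ler_pdivrMr// mulrAC ler_pdivlMr ?inner_wstar_gt0//.
    by have := ler_wpM2l (Q_ge0 x) lam_le; lra.
  have Q_lt : Q x < Qstar.
    rewrite lt_neqAle Q_le andbT; apply/negP => /eqP QE.
    move: ratio_le; rewrite wE QE divff ?gt_eqF//.
    by have := divr_gt0 alpha_gt0 ws_gt0; lra.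
  rewrite /Qweight lt_eqF// lee_fin -[Qstar / _]invf_div -[wstar x / _]invf_div.
  rewrite lef_pV2 ?posrE ?divr_gt0 ?subr_gt0//.
  have -> : (Qstar - Q x) / Qstar = 1 - Q x / Qstar by rewrite mulrBl divff ?gt_eqF.
  lra.
have integral_le : (\int[pi]_x (Qweight x * (pref x)%:E) <= alpha^-1%:E)%E.
  apply: le_trans (le_integral_density _ _ _ weight_le) _.
  - by move=> x; apply: le_trans (Qweight_ge1 x).
  - by move=> x; rewrite lee_fin divr_ge0 ?(ltW alpha_gt0).
  - by apply/measurable_EFinP; apply: measurable_funM.
  under eq_integral do rewrite -EFinM mulrAC mulrC.
  rewrite integralZ_EFin ?wstar_int1 ?mule1 ?invr_ge0 ?(ltW alpha_gt0)//.
    exact: measurable_funM.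
  by move=> x; rewrite mulr_ge0.
have := einv_ge alpha_gt0 integral_Qweight_ge1 integral_le.
by rewrite leNgt alpha_large.
Qed.

Let delta := 1 - (1 - alpha) * Qstar / lam.

Let delta_gt0 : 0 < delta.
Proof. by rewrite subr_gt0 ltr_pdivrMr ?inner_wstar_gt0// mul1r inner_wstar_gt. Qed.

Let delta_le1 : delta <= 1.
Proof.
by rewrite lerBlDr lerDl divr_ge0 ?mulr_ge0 ?oneBalpha_ge0 ?lam_ge0 ?(ltW Qstar_gt0).
Qed.

Let mix_gt0 y : 0 <= y -> 0 < delta + (1 - delta) * y.
Proof. by move=> y_ge0; rewrite ltr_pwDl ?delta_gt0// mulr_ge0 ?subr_ge0 ?delta_le1. Qed.

Lemma wstar_weight : {ae density_measure, forall x,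
  [/\ 0 < wstar x, delta <= alpha / wstar x <= 1 &
      (1 - alpha) * Q x / lam = 1 - alpha / wstar x]}.
Proof.
apply: filterS wstar_fixed_weight => x [ws_gt0 wE]; split => //.
have Q_term_ge0 : 0 <= (1 - alpha) * Q x / lam.
  by rewrite divr_ge0 ?mulr_ge0 ?oneBalpha_ge0 ?lam_ge0.
have Q_term_le : (1 - alpha) * Q x / lam <= (1 - alpha) * Qstar / lam.
  by rewrite ler_wpM2r ?invr_ge0 ?lam_ge0// ler_wpM2l ?oneBalpha_ge0.
by rewrite /delta; apply/andP; split; lra.
Qed.

Lemma iter_ratio_succ t x : 0 < pref x -> 0 < wstar x ->
  (1 - alpha) * Q x / lam = 1 - alpha / wstar x ->
  w t.+1 x / wstar x =
  alpha / wstar x + (1 - alpha / wstar x) * (lam / Z t * (w t x / wstar x)).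
Proof.
move=> pref_gt0 ws_gt0 <-; rewrite iter_weight_succ//; set z := (Z t)^-1.
by field; rewrite !gt_eqF ?inner_wstar_gt0.
Qed.

Lemma iter_Q_within {t m M} : ratio_within density_measure (w t) wstar m M ->
  {ae pi, forall x, m * (wstar x * Q x * pref x) <= p t x * Q x
                    <= M * (wstar x * Q x * pref x)}.
Proof.
move=> uv; apply: filterS2 (density_measure_ae uv) iter_eq_weight_pref.
move=> x uvx /(_ t) ->; have [pref_gt0|pref_le0] := ltP 0 (pref x); last first.
  have -> : pref x = 0 by apply/eqP; rewrite eq_le pref_le0 pref_ge0.
  by rewrite !(mulr0, mul0r) lexx.
have [_ ws_gt0 /andP[m_le le_M]] := uvx pref_gt0.
rewrite ler_pdivlMr// in m_le; rewrite ler_pdivrMr// in le_M.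
have QP_ge0 : 0 <= Q x * pref x by rewrite mulr_ge0.
have lo : 0 <= (w t x - m * wstar x) * (Q x * pref x) by rewrite mulr_ge0 ?subr_ge0.
have hi : 0 <= (M * wstar x - w t x) * (Q x * pref x) by rewrite mulr_ge0 ?subr_ge0.
by apply/andP; split; lra.
Qed.

Lemma normalizer_bounds {t m M} : 0 < m ->
  ratio_within density_measure (w t) wstar m M -> m * lam <= Z t <= M * lam.
Proof.
move=> m_gt0 uv; have M_gt0 := lt_le_trans m_gt0 (ratio_within_le density_measureT_gt0 uv).
have scaled k : 0 <= k ->
    (\int[pi]_x (k * (wstar x * Q x * pref x))%:E = (k * lam)%:E)%E.
  move=> k_ge0; rewrite integralZ_EFin// ?inner_wstarE//.
    by apply: measurable_funM => //; exact: measurable_funM.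
  by move=> x; rewrite !mulr_ge0.
have int_le : (\int[pi]_x (p t x * Q x)%:E <= (M * lam)%:E)%E.
  rewrite -scaled ?(ltW M_gt0)//; apply: ae_ge0_le_integral_nm => [x|x||].
  - by rewrite lee_fin mulr_ge0 ?iter_ge0.
  - by rewrite lee_fin !mulr_ge0 ?(ltW M_gt0).
  - apply/measurable_EFinP; apply: measurable_funM => //.
    by apply: measurable_funM => //; exact: measurable_funM.
  by apply: filterS (iter_Q_within uv) => x /andP[_]; rewrite lee_fin.
have int_ge : ((m * lam)%:E <= \int[pi]_x (p t x * Q x)%:E)%E.
  rewrite -scaled ?(ltW m_gt0)//; apply: ae_ge0_le_integral_nm => [x|x||].
  - by rewrite lee_fin !mulr_ge0 ?(ltW m_gt0).
  - by rewrite lee_fin mulr_ge0 ?iter_ge0.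
  - by apply/measurable_EFinP; apply: measurable_funM => //; exact: measurable_iter.
  by apply: filterS (iter_Q_within uv) => x /andP[+ _]; rewrite lee_fin.
have int_fin : (\int[pi]_x (p t x * Q x)%:E)%E \is a fin_num.
  rewrite ge0_fin_numE ?(le_lt_trans int_le (ltry _))//.
  by apply: integral_ge0 => x _; rewrite lee_fin mulr_ge0 ?iter_ge0.
by rewrite /Z -!lee_fin fineK// int_le int_ge.
Qed.

Lemma ratio_within_iter_succ {t m M} : 0 < m ->
  ratio_within density_measure (w t) wstar m M ->
  ratio_within density_measure (w t.+1) wstar
    (delta + (1 - delta) * (lam / Z t * m)) (delta + (1 - delta) * (lam / Z t * M)).
Proof.
move=> m_gt0 uv; have /andP[mZ ZM] := normalizer_bounds m_gt0 uv.
have Z_gt0 : 0 < Z t by apply: lt_le_trans mZ; rewrite mulr_gt0 ?inner_wstar_gt0.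
have c_gt0 : 0 < lam / Z t by rewrite divr_gt0 ?inner_wstar_gt0.
have cm_le1 : lam / Z t * m <= 1 by rewrite mulrAC ler_pdivrMr// mul1r mulrC.
have cM_ge1 : 1 <= lam / Z t * M by rewrite mulrAC ler_pdivlMr// mul1r mulrC.
apply: filterS2 uv (filterI ae_density_measure_gt0 wstar_weight).
move=> x [_ ws_gt0 /andP[m_le le_M]] [pref_gt0 [_ s_bounds wE]].
have ws1_gt0 : 0 < w t.+1 x := lt_le_trans alpha_gt0 (alpha_le_iter_weight_succ t x pref_gt0).
split => //; rewrite iter_ratio_succ//.
have /andP[_ s_le1] := s_bounds; have s'_ge0 : 0 <= 1 - alpha / wstar x by rewrite subr_ge0.
apply/andP; split.
- apply: le_trans (mix_ge s_bounds cm_le1) _.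
  by rewrite lerD2l ler_wpM2l// ler_wpM2l// ltW.
- apply: le_trans (mix_le s_bounds cM_ge1).
  by rewrite lerD2l ler_wpM2l// ler_wpM2l// ltW.
Qed.

Lemma ratio_within_iter1 : exists M, ratio_within density_measure (w 1) wstar delta M.
Proof.
have [Y bounded] := iter_weight0_bounded.
set C := alpha + (1 - alpha) * (Y * Qstar) / Z 0.
exists (C / alpha).
apply: filterS2 (ae_density_measure bounded) (filterI ae_density_measure_gt0 wstar_weight).
move=> x [_ w0_le] [pref_gt0 [ws_gt0 /andP[s_ge s_le1] _]].
have alpha_le := alpha_le_iter_weight_succ 0 x pref_gt0.
have w1_gt0 : 0 < w 1 x := lt_le_trans alpha_gt0 alpha_le.
have w1_le : w 1 x <= C.
  rewrite iter_weight_succ// lerD2l ler_wpM2r ?invr_ge0 ?Z_ge0// -mulrA.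
  by rewrite ler_wpM2l ?oneBalpha_ge0// ler_pM ?w_ge0 ?Q_ge0 ?w0_le.
have alpha_le_ws : alpha <= wstar x by rewrite -[wstar x]mul1r -ler_pdivrMr.
split => //; apply/andP; split.
- by apply: le_trans s_ge _; rewrite ler_wpM2r ?invr_ge0 ?(ltW ws_gt0).
- by rewrite ler_pM ?w_ge0 ?invr_ge0 ?(ltW ws_gt0)// lef_pV2 ?posrE.
Qed.

Let A t := ess_sup density_measure (fun x => (w t x / wstar x)%:E).
Let B t := ess_sup density_measure (fun x => (wstar x / w t x)%:E).
Let osc t := fine (A t.+1) * fine (B t.+1).

Lemma ess_sup_iter_ratio t : exists a b, [/\ A t.+1 = a%:E, B t.+1 = b%:E, 0 < b &
  ratio_within density_measure (w t.+1) wstar b^-1 a].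
Proof.
elim: t => [|t [a [b [_ _ b_gt0 uv]]]].
  have [M uv] := ratio_within_iter1.
  have [a [b [Aa Bb b_gt0 _ uv']]] := ess_sup_ratio density_measureT_gt0 delta_gt0 uv.
  by exists a, b.
have binv_gt0 : 0 < b^-1 by rewrite invr_gt0.
have m_gt0 : 0 < delta + (1 - delta) * (lam / Z t.+1 * b^-1).
  by rewrite mix_gt0// !mulr_ge0 ?invr_ge0 ?Z_ge0 ?lam_ge0 ?(ltW b_gt0).
have [a' [b' [Aa Bb b'_gt0 _ uv']]] :=
  ess_sup_ratio density_measureT_gt0 m_gt0 (ratio_within_iter_succ binv_gt0 uv).
by exists a', b'.
Qed.

Lemma osc_ge1 t : 1 <= osc t.
Proof.
have [a [b [Aa Bb b_gt0 uv]]] := ess_sup_iter_ratio t.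
rewrite /osc Aa Bb /= -(mulVf (lt0r_neq0 b_gt0)) ler_pM2r//.
exact: (ratio_within_le density_measureT_gt0 uv).
Qed.

Lemma osc_contract t : osc t.+1 <= delta + (1 - delta) * osc t.
Proof.
have [a [b [Aa Bb b_gt0 uv]]] := ess_sup_iter_ratio t.
have m_gt0 : 0 < b^-1 by rewrite invr_gt0.
have /andP[mZ ZM] := normalizer_bounds m_gt0 uv.
set c := lam / Z t.+1.
have Z_gt0 : 0 < Z t.+1 by apply: lt_le_trans mZ; rewrite mulr_gt0 ?inner_wstar_gt0.
have c_gt0 : 0 < c by rewrite divr_gt0 ?inner_wstar_gt0.
have cm : 0 < c * b^-1 <= 1 by rewrite mulr_gt0//= mulrAC ler_pdivrMr// mul1r mulrC.
have cM : 1 <= c * a by rewrite mulrAC ler_pdivlMr// mul1r mulrC.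
have m'_gt0 : 0 < delta + (1 - delta) * (c * b^-1).
  by apply: mix_gt0; rewrite mulr_ge0 ?invr_ge0 ?ltW.
have [a' [b' [Aa' Bb' b'_gt0 [a'_le b'_le] uv']]] :=
  ess_sup_ratio density_measureT_gt0 m'_gt0 (ratio_within_iter_succ m_gt0 uv).
have a'_gt0 : 0 < a'.
  by apply: lt_le_trans (ratio_within_le density_measureT_gt0 uv'); rewrite invr_gt0.
rewrite /osc Aa Bb /A /B Aa' Bb' /=.
apply: (@le_trans _ _ ((delta + (1 - delta) * (c * a)) /
                        (delta + (1 - delta) * (c * b^-1)))).
  by rewrite ler_pM ?(ltW a'_gt0) ?(ltW b'_gt0).
have -> : a * b = c * a / (c * b^-1) by field; rewrite !gt_eqF.
by apply: mix_ratio_le; rewrite ?(ltW delta_gt0) ?delta_le1.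
Qed.

Lemma hilbert_iterE t : hilbert_ref pi pref (w t.+1) wstar = (ln (osc t))%:E.
Proof.
have [a [b [Aa Bb _ _]]] := ess_sup_iter_ratio t.
by rewrite /osc Aa Bb; exact: hilbert_refE.
Qed.

Lemma hilbert_iter_decreasing_cvg0 :
  [/\ (forall t, (1 <= t)%N -> (hilbert_ref pi pref (w t) wstar < +oo)%E),
      (forall t, (1 <= t)%N ->
         (hilbert_ref pi pref (w t.+1) wstar <= hilbert_ref pi pref (w t) wstar)%E
         /\ ((0 < hilbert_ref pi pref (w t) wstar)%E ->
             (hilbert_ref pi pref (w t.+1) wstar < hilbert_ref pi pref (w t) wstar)%E))
    & (hilbert_ref pi pref (w t) wstar @[t --> \oo] --> 0%E)].
Proof.
have [ln_le ln_lt ln_cvg0] :=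
  ln_affine_contraction delta_gt0 delta_le1 osc_ge1 osc_contract.
split.
- by case=> // t _; rewrite hilbert_iterE ltry.
- case=> // t _; rewrite !hilbert_iterE lee_fin !lte_fin.
  by split; [exact: ln_le | exact: ln_lt].
rewrite -cvg_shiftS; under eq_fun do rewrite /= hilbert_iterE.
by apply: cvg_EFin; first exact: nearW.
Qed.

End iteration.

End density_measure.

Section Qfun.
Context d (X : measurableType d) d' (Omega : measurableType d') (R : realType).
Variables (P : probability Omega R) (r : X -> R) (eps : X -> Omega -> R).

Lemma Qfun_ge0 x : (0 <= Qfun P r eps x)%E.
Proof.
rewrite mule_ge0 ?lee_fin ?expR_ge0//.
by apply: integral_ge0 => w _; rewrite lee_fin expR_ge0.
Qed.

Lemma measurable_fine_Qfun : measurable_fun [set: X] r ->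
  measurable_fun [set: X * Omega] (fun z => eps z.1 z.2) ->
  measurable_fun [set: X] (fun x => fine (Qfun P r eps x)).
Proof.
move=> mr meps; apply: measurableT_comp (fine_measurable measurableT) _.
apply: emeasurable_funM; first by apply/measurable_EFinP; exact: measurableT_comp.
apply: (measurable_fun_fubini_tonelli_F (fun z => (expR (eps z.1 z.2))%:E)).
  by apply/measurable_EFinP; exact: measurableT_comp.
by move=> z; rewrite lee_fin expR_ge0.
Qed.

End Qfun.

Theorem theorem6 (R : realType)
  (d : measure_display) (X : measurableType d) (pi : {measure set X -> \bar R})
  (d' : measure_display) (Omega : measurableType d') (P : probability Omega R)
  (r : X -> R) (eps : X -> Omega -> R) (alpha Qstar : R)
  (p0 pref wstar : X -> R) :
  sigma_finite [set: X] pi ->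
  measurable_fun [set: X] r ->
  measurable_fun [set: X * Omega] (fun z => eps z.1 z.2) ->
  0 < alpha < 1 ->
  (* (a) *)
  is_density pi p0 -> is_density pi pref ->
  (\int[pi]_x (p0 x * `|ln (p0 x)|)%:E < +oo)%E ->
  (\int[pi]_x (pref x * `|ln (pref x)|)%:E < +oo)%E ->
  (* (b) *)
  (forall p, is_density pi p ->
     (\int[pi]_x ((p x)%:E * \int[P]_w (expR `|r x + eps x w|)%:E) < +oo)%E) ->
  (* (c) *)
  ess_sup pi (Qfun P r eps) = Qstar%:E -> 0 < Qstar ->
  (forall x, (Qfun P r eps x <= Qstar%:E)%E) ->
  (* (d) *)
  (ess_sup pi (fun x => ratio_e (p0 x) (pref x)) < +oo)%E ->
  (* (e) *)
  (einv (\int[pi]_x ((if fine (Qfun P r eps x) == Qstar then +oo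
                      else (Qstar / (Qstar - fine (Qfun P r eps x)))%:E)
                     * (pref x)%:E)) < alpha%:E)%E ->
  (* (f) *)
  (0 < ess_inf pi (Qfun P r eps))%E ->
  (* w_* : the fixed point of L_N in P_{P_ref} *)
  measurable_fun [set: X] wstar -> (forall x, 0 <= wstar x) ->
  (\int[pi]_x (wstar x * pref x)%:E = 1)%E ->
  ae_ref pi pref (fun x => 0 < wstar x) ->
  ae_ref pi pref (fun x => wstar x =
     alpha + (1 - alpha) * wstar x * fine (Qfun P r eps x)
             / inner_ref pi pref wstar (fun y => fine (Qfun P r eps y))) ->
  let w := fun t x =>
    iter_p pi alpha pref (fun y => fine (Qfun P r eps y)) p0 t x / pref x in
  [/\ (forall t, (1 <= t)%N -> (hilbert_ref pi pref (w t) wstar < +oo)%E),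
      (forall t, (1 <= t)%N ->
         (hilbert_ref pi pref (w t.+1) wstar <= hilbert_ref pi pref (w t) wstar)%E
         /\ ((0 < hilbert_ref pi pref (w t) wstar)%E ->
             (hilbert_ref pi pref (w t.+1) wstar < hilbert_ref pi pref (w t) wstar)%E))
    & (hilbert_ref pi pref (w t) wstar @[t --> \oo] --> 0%E)].
Proof.
move=> _ mr meps /andP[alpha_gt0 alpha_lt1] [mp0 p0_ge0 _] [mpref pref_ge0 pref_int1]
  _ _ _ _ Qstar_gt0 Qfun_le p0_bounded alpha_large _ mwstar wstar_ge0 wstar_int1
  wstar_gt0 wstar_fixed.
have Q_le x : fine (Qfun P r eps x) <= Qstar.
  rewrite -lee_fin fineK// ge0_fin_numE ?Qfun_ge0//.
  exact: le_lt_trans (Qfun_le x) (ltry _).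
apply: hilbert_iter_decreasing_cvg0 => //; first exact: measurable_fine_Qfun.
by move=> x; rewrite fine_ge0 ?Qfun_ge0.
Qed.
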